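(* The image of the cone $C$ under the linear map $\psi^*\otimes\mathbb{R}:\mathbb{Z}(Q)^\vee\otimes\mathbb{R}\to N\otimes\mathbb{R}$ is the cone $\sigma$.
   Context: Let $\mathbb{k}$ be an algebraically closed field and $X=\operatorname{Spec}R$ a normal affine toric variety of dimension $n$ with a torus-fixed point, $R=\mathbb{k}[\sigma^\vee\cap M]$, $\sigma\subset N\otimes\mathbb{R}$ strongly convex rational polyhedral, $N=M^\vee$. Let $\sigma(1)$ be the rays, $d=|\sigma(1)|$, $v_\rho$ primitive generators, $D_\rho$ toric prime divisors, torus-invariant divisors identified with $\mathbb{Z}^d$; exact sequence $0\to M\to\mathbb{Z}^d\xrightarrow{\deg}\operatorname{Cl}(X)\to0$, $u\mapsto\sum_\rho\langle u,v_\rho\rangle D_\rho$. Let $\mathscr{E}=(E_0=\mathcal{O}_X,E_1,\dots,E_r)$ be pairwise distinct rank one reflexive sheaves, $E_i=\mathcal{O}_X(D_i')$, and $Q$ its quiver of sections: vertices $0,\dots,r$; an arrow $a:i\to j$ with label $\operatorname{div}(a)\in\mathbb{N}^d$ for each irreducible $T_M$-invariant section $x^{\operatorname{div}(a)}$ of $\operatorname{Hom}(E_i,E_j)\cong H^0(\mathcal{O}_X(D_j'-D_i'))$ (irreducible: not in the image of multiplication through any $E_k$, $k\neq i,j$). $\operatorname{Wt}(Q)=\{\theta\in\mathbb{Z}^{Q_0}:\sum\theta_i=0\}$; $\pi:\mathbb{Z}^{Q_1}\to\operatorname{Wt}(Q)\oplus\mathbb{Z}^d$, $\chi_a\mapsto(\chi_{\mathsf{h}(a)}-\chi_{\mathsf{t}(a)},\operatorname{div}(a))$;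 $\mathbb{Z}(Q)=\pi(\mathbb{Z}^{Q_1})$, $\mathbb{N}(Q)=\pi(\mathbb{N}^{Q_1})$; $\pi_1,\pi_2$ the projections to $\operatorname{Wt}(Q)$ and $\mathbb{Z}^d$. The restriction of $\pi_2$ to $\ker\pi_1$ is an isomorphism onto the image of $M$ in $\mathbb{Z}^d$; let $\psi:M\to\mathbb{Z}(Q)$ be the resulting injection (so $\pi_2\circ\psi$ is the inclusion $M\hookrightarrow\mathbb{Z}^d$), with dual $\psi^*:\mathbb{Z}(Q)^\vee\to N$. Let $C=\{v\in\mathbb{Z}(Q)^\vee\otimes\mathbb{R}:\langle v,u\rangle\ge0\ \forall u\in\mathbb{N}(Q)\}$. *)

From HB Require Import structures.
From mathcomp Require Import all_boot all_order all_algebra.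
From mathcomp Require Import reals.
Set Implicit Arguments. Unset Strict Implicit. Unset Printing Implicit Defensive.
Import Order.TTheory GRing.Theory Num.Theory.
Local Open Scope ring_scope.

(* M = N = Z^n (row vectors), with the standard pairing.
   Rays: v : 'I_d -> 'rV[int]_n (the primitive generators v_rho in N).
   Torus-invariant divisors: 'rV[int]_d = Z^d. *)

(* the map M -> Z^d, u |-> sum_rho <u, v_rho> D_rho *)
Definition divmap (n d : nat) (v : 'I_d -> 'rV[int]_n) (u : 'rV[int]_n)
  : 'rV[int]_d := \row_rho (\sum_i u 0 i * v rho 0 i).

(* e is the label (divisor of zeros) of a T_M-invariant section of O_X(D):
   e is effective and linearly equivalent to D *)
Definition inv_section (n d : nat) (v : 'I_d -> 'rV[int]_n)
  (D e : 'rV[int]_d) : Prop :=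
  (forall rho, 0 <= e 0 rho) /\ exists u, e = D + divmap v u.

(* irreducible T_M-invariant section of Hom(E_i,E_j) = H^0(O(D_j' - D_i'))
   with label e: not in the image of multiplication through E_k, k <> i,j *)
Definition irr_arrow (n d r : nat) (v : 'I_d -> 'rV[int]_n)
  (D' : 'I_r.+1 -> 'rV[int]_d) (i j : 'I_r.+1) (e : 'rV[int]_d) : Prop :=
  inv_section v (D' j - D' i) e /\
  ~ (exists k : 'I_r.+1, k != i /\ k != j /\
       exists e1 e2, inv_section v (D' k - D' i) e1 /\
                     inv_section v (D' j - D' k) e2 /\ e = e1 + e2).

Definition chi (r : nat) (i : 'I_r.+1) : 'rV[int]_r.+1 :=
  \row_k (k == i)%:R.

(* pi(chi_a) = (chi_{h(a)} - chi_{t(a)}, div(a)) in Wt(Q) (+) Z^d *)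
Definition piQ (d r : nat) (i j : 'I_r.+1) (e : 'rV[int]_d)
  : 'rV[int]_r.+1 * 'rV[int]_d := (chi j - chi i, e).

(* N(Q) = pi(N^{Q_1}) : the monoid generated by the pi(chi_a) *)
Inductive NQ (n d r : nat) (v : 'I_d -> 'rV[int]_n)
  (D' : 'I_r.+1 -> 'rV[int]_d) : 'rV[int]_r.+1 * 'rV[int]_d -> Prop :=
| NQ0 : NQ v D' 0
| NQadd : forall x i j e, NQ v D' x -> irr_arrow v D' i j e ->
    NQ v D' (x + piQ i j e).

(* Z(Q) = pi(Z^{Q_1}) = N(Q) - N(Q) *)
Definition ZQ (n d r : nat) (v : 'I_d -> 'rV[int]_n)
  (D' : 'I_r.+1 -> 'rV[int]_d) (x : 'rV[int]_r.+1 * 'rV[int]_d) : Prop :=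
  exists y z, NQ v D' y /\ NQ v D' z /\ x = y - z.

(* psi : M -> Z(Q): the unique element of ker pi_1 with pi_2 = u |-> div *)
Definition psiQ (n d r : nat) (v : 'I_d -> 'rV[int]_n) (m : 'rV[int]_n)
  : 'rV[int]_r.+1 * 'rV[int]_d := (0, divmap v m).

Definition in_cone (R : realType) (n d : nat) (v : 'I_d -> 'rV[int]_n)
  (P : pred 'I_d) (x : 'rV[R]_n) : Prop :=
  exists lam : 'I_d -> R, (forall rho, 0 <= lam rho) /\
    x = \sum_(rho | P rho) lam rho *: map_mx (fun z : int => z%:~R) (v rho).

Definition pairMN (R : realType) (n : nat) (m : 'rV[int]_n) (x : 'rV[R]_n) : R :=
  \sum_i (m 0 i)%:~R * x 0 i.

From HB Require Import structures.
From mathcomp Require Import all_boot all_order all_algebra.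
From mathcomp Require Import reals boolp.
From mathcomp Require Import ring lra zify.
Import Order.TTheory GRing.Theory Num.Theory.
Local Open Scope ring_scope.
Set Implicit Arguments. Unset Strict Implicit. Unset Printing Implicit Defensive.

(* If x = sum lam_rho v_rho with lam >= 0, then (t, e) |-> sum lam_rho e_rho is
   nonnegative on N(Q), because arrow labels are effective divisors, and it
   restricts to <-, x> along psi.  Conversely, let phi be nonnegative on N(Q)
   with phi o psi = <-, x>.  For m in the dual cone, div m is the label of a
   section of O_X(D_0' - D_0'), and factoring it into irreducible sections
   writes psi m as a sum of arrow vectors, so <m, x> = phi (psi m) >= 0.  Hence
   x lies in the double dual of sigma, which is sigma by Farkas' lemma; the
   latter is proved by Fourier-Motzkin elimination over integer constraints. *)

Section FourierMotzkin.
Variables (R : realFieldType) (d : nat).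

Definition constraint := ('rV[int]_d * R)%type.

Definition dot (c : 'rV[int]_d) (l : 'I_d -> R) := \sum_k (c 0 k)%:~R * l k.

Definition sat (l : 'I_d -> R) (p : constraint) := dot p.1 l <= p.2.

Inductive derivable (S : seq constraint) : constraint -> Prop :=
| derivable0 : derivable S 0
| derivableS p q : derivable S p -> q \in S -> derivable S (p + q).

Lemma derivableD S p q : derivable S p -> derivable S q -> derivable S (p + q).
Proof.
move=> hp; elim=> [|q1 q2 _ IH hq2]; first by rewrite addr0.
by rewrite addrA; apply: derivableS.
Qed.

Lemma derivable_mem S q : q \in S -> derivable S q.
Proof. by move=> hq; rewrite -[q]add0r; apply: derivableS => //; apply: derivable0. Qed.

Lemma derivableMn S p k : derivable S p -> derivable S (p *+ k).
Proof.
move=> hp; elim: k => [|k IH]; first by rewrite mulr0n; apply: derivable0.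
by rewrite mulrS; apply: derivableD.
Qed.

Lemma derivable_trans S S' p :
  (forall q, q \in S' -> derivable S q) -> derivable S' p -> derivable S p.
Proof.
move=> hS; elim=> [|p1 q _ IH hq]; first exact: derivable0.
by apply: derivableD => //; apply: hS.
Qed.

Lemma dotD c1 c2 l : dot (c1 + c2) l = dot c1 l + dot c2 l.
Proof. by rewrite /dot -big_split; apply: eq_bigr => k _; rewrite mxE intrD mulrDl. Qed.

Lemma dotN c l : dot (- c) l = - dot c l.
Proof. by rewrite /dot -sumrN; apply: eq_bigr => k _; rewrite mxE intrN mulNr. Qed.

Lemma dotMn c k l : dot (c *+ k) l = dot c l *+ k.
Proof.
rewrite /dot -sumrMnl; apply: eq_bigr => i _.
by rewrite mulmxnE -mulrnAl raddfMn.
Qed.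

Lemma dot_delta rho l : dot (delta_mx 0 rho) l = l rho.
Proof.
rewrite /dot (bigD1 rho) //= big1 ?addr0; first by rewrite mxE !eqxx mul1r.
by move=> k /negbTE hk; rewrite mxE hk andbF mul0r.
Qed.

Definition update (l : 'I_d -> R) j t := fun k => if k == j then t else l k.

Lemma dot_update c l j t :
  dot c (update l j t) = dot c l - (c 0 j)%:~R * l j + (c 0 j)%:~R * t.
Proof.
rewrite /dot (bigD1 j) //= [in RHS](bigD1 j) //= /update eqxx.
rewrite (eq_bigr (fun i => (c 0 i)%:~R * l i)); first lra.
by move=> k /negbTE ->.
Qed.

Lemma exists_between (L U : seq R) : (forall a b, a \in L -> b \in U -> a <= b) ->
  exists t, (forall a, a \in L -> a <= t) /\ (forall b, b \in U -> t <= b).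
Proof.
elim: L => [|a L IH] hLU.
  elim: U {hLU} => [|u U [t [_ ht]]]; first by exists 0.
  exists (Order.min t u); split => // b; rewrite inE => /orP [/eqP ->|hb].
    by rewrite ge_min lexx orbT.
  by rewrite ge_min ht.
case: IH => [a' b ha hb|t [hL hU]]; first by apply: hLU => //; rewrite inE ha orbT.
exists (Order.max t a); split.
  move=> a'; rewrite inE => /orP [/eqP ->|ha]; first by rewrite le_max lexx orbT.
  by rewrite le_max hL.
by move=> b hb; rewrite ge_max hU // hLU // inE eqxx.
Qed.

Section Elimination.
Variables (j : 'I_d) (S : seq constraint).

Definition pos_rows := [seq p : constraint <- S | 0 < p.1 0 j].
Definition neg_rows := [seq p : constraint <- S | p.1 0 j < 0].
Definition zero_rows := [seq p : constraint <- S | p.1 0 j == 0].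

Definition combine (p q : constraint) : constraint :=
  p *+ absz (q.1 0 j) + q *+ absz (p.1 0 j).

Definition eliminate : seq constraint :=
  zero_rows ++ [seq combine p q | p <- pos_rows, q <- neg_rows].

Lemma combine_coef (p q : constraint) k :
  (combine p q).1 0 k = p.1 0 k *+ absz (q.1 0 j) + q.1 0 k *+ absz (p.1 0 j).
Proof. by rewrite /combine /= mxE !raddfMn /= !mulmxnE. Qed.

Lemma eliminate_mem q : q \in eliminate ->
  [/\ q.1 0 j = 0, forall k, {in S, forall p : constraint, p.1 0 k = 0} -> q.1 0 k = 0
    & derivable S q].
Proof.
rewrite mem_cat => /orP [].
  rewrite mem_filter => /andP [/eqP qj qS].
  by split=> // [k hk|]; [apply: hk | apply: derivable_mem].
move=> /allpairsP [[p q'] [/=]]; rewrite !mem_filter => /andP [hp pS] /andP [hq qS] ->.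
split.
- rewrite combine_coef !mulr_absz !mulrzz (gtr0_norm hp) (ltr0_norm hq).
  by rewrite mulrN mulrC addNr.
- by move=> k hk; rewrite combine_coef !hk // !mul0rn addr0.
- by apply: derivableD; apply: derivableMn; apply: derivable_mem.
Qed.

Definition slack (l : 'I_d -> R) (p : constraint) :=
  p.2 - dot p.1 l + (p.1 0 j)%:~R * l j.

Lemma sat_update l t (p : constraint) :
  sat (update l j t) p = ((p.1 0 j)%:~R * t <= slack l p).
Proof. by rewrite /sat /slack dot_update; apply/idP/idP => h; lra. Qed.

Lemma sat_combine l (p q : constraint) :
  0 < p.1 0 j -> q.1 0 j < 0 -> sat l (combine p q) ->
  slack l q / (q.1 0 j)%:~R <= slack l p / (p.1 0 j)%:~R.
Proof.
move=> hp hq; rewrite /sat /combine /= dotD !raddfMn /= !dotMn.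
rewrite !mulr_absz (gtr0_norm hp) (ltr0_norm hq) !mulrNz.
rewrite -!(mulrzr (dot _ _)) -(mulrzr p.2) -(mulrzr q.2) /slack.
have cp_gt0 : 0 < (p.1 0 j)%:~R :> R by rewrite ltr0z.
have cq_lt0 : (q.1 0 j)%:~R < 0 :> R by rewrite ltrz0.
rewrite ler_ndivrMr // mulrAC ler_pdivrMr //.
lra.
Qed.

Lemma eliminate_feasible l : (forall q, q \in eliminate -> sat l q) ->
  exists l', forall p, p \in S -> sat l' p.
Proof.
move=> hl.
pose lower := [seq slack l q / (q.1 0 j)%:~R | q <- neg_rows].
pose upper := [seq slack l p / (p.1 0 j)%:~R | p <- pos_rows].
have [t [hlo hup]] :
    exists t, (forall a, a \in lower -> a <= t) /\ (forall b, b \in upper -> t <= b).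
  apply: exists_between => a b /mapP [q hq ->] /mapP [p hp ->].
  move: (hp) (hq); rewrite !mem_filter => /andP [hpj _] /andP [hqj _].
  apply: sat_combine => //; apply: hl.
  by rewrite mem_cat; apply/orP; right; apply/allpairsP; exists (p, q).
exists (update l j t) => p pS; rewrite sat_update.
have [hpos|hneg|hzero] := ltrgtP 0 (p.1 0 j).
- rewrite mulrC -ler_pdivlMr ?ltr0z //; apply: hup; apply/mapP; exists p => //.
  by rewrite mem_filter hpos.
- rewrite mulrC -ler_ndivrMr ?ltrz0 //; apply: hlo; apply/mapP; exists p => //.
  by rewrite mem_filter hneg.
- have : sat l p by apply: hl; rewrite mem_cat mem_filter -hzero eqxx pS.
  by rewrite -hzero mul0r /sat /slack -hzero mul0r addr0 subr_ge0.
Qed.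

End Elimination.

Theorem fourier_motzkin (J : seq 'I_d) (S : seq constraint) :
  (forall p k, p \in S -> k \notin J -> p.1 0 k = 0) ->
  (exists l, forall p, p \in S -> sat l p) \/ (exists2 b, b < 0 & derivable S (0, b)).
Proof.
elim: J S => [|j J IH] S hS.
  have hz p : p \in S -> p.1 = 0.
    by move=> pS; apply/matrixP => i k; rewrite [i]ord1 mxE hS.
  have [/allP hb|] := boolP (all (fun p : constraint => 0 <= p.2) S).
    left; exists (fun _ => 0) => p pS; rewrite /sat hz // /dot big1 ?hb //.
    by move=> k _; rewrite mxE mul0r.
  rewrite -has_predC => /hasP [p pS /=]; rewrite -ltNge => hp.
  right; exists p.2 => //.
  by move: (hz p pS) (derivable_mem pS); case: p {pS hp} => c b /= ->.
case: (IH (eliminate j S)) => [|[l hl]|[b hb hder]].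
- move=> q k /eliminate_mem [qj hq _] hkJ.
  have [/eqP -> //|hkj] := boolP (k == j).
  by apply: hq => p pS; apply: hS => //; rewrite inE negb_or hkj.
- by left; apply: eliminate_feasible hl.
- right; exists b => //.
  by apply: derivable_trans hder => q /eliminate_mem [].
Qed.

End FourierMotzkin.

Section Cone.
Variables (n d : nat) (v : 'I_d -> 'rV[int]_n).

Lemma divmapD u w : divmap v (u + w) = divmap v u + divmap v w.
Proof.
apply/matrixP => a rho; rewrite !mxE -big_split.
by apply: eq_bigr => i _; rewrite mxE mulrDl.
Qed.

Lemma divmapN u : divmap v (- u) = - divmap v u.
Proof.
apply/matrixP => a rho; rewrite !mxE -sumrN.
by apply: eq_bigr => i _; rewrite mxE mulNr.
Qed.

Lemma divmap0 : divmap v 0 = 0.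
Proof. by apply/matrixP => a rho; rewrite !mxE big1 // => i _; rewrite mxE mul0r. Qed.

Lemma divmap_delta i0 rho : divmap v (delta_mx 0 i0) 0 rho = v rho 0 i0.
Proof.
rewrite mxE (bigD1 i0) //= big1 ?addr0; first by rewrite mxE !eqxx mul1r.
by move=> i /negbTE hi; rewrite mxE hi andbF mul0r.
Qed.

Variable R : realType.

Lemma pairMND (u w : 'rV[int]_n) (x : 'rV[R]_n) :
  pairMN (u + w) x = pairMN u x + pairMN w x.
Proof.
by rewrite /pairMN -big_split; apply: eq_bigr => i _; rewrite mxE intrD mulrDl.
Qed.

Lemma pairMNN (u : 'rV[int]_n) (x : 'rV[R]_n) : pairMN (- u) x = - pairMN u x.
Proof. by rewrite /pairMN -sumrN; apply: eq_bigr => i _; rewrite mxE intrN mulNr. Qed.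

Lemma pairMN0 (x : 'rV[R]_n) : pairMN 0 x = 0.
Proof. by rewrite /pairMN big1 // => i _; rewrite mxE mul0r. Qed.

Lemma pairMN_delta i0 (x : 'rV[R]_n) : pairMN (delta_mx 0 i0) x = x 0 i0.
Proof.
rewrite /pairMN (bigD1 i0) //= big1 ?addr0; first by rewrite mxE !eqxx mul1r.
by move=> i /negbTE hi; rewrite mxE hi andbF mul0r.
Qed.

Lemma pairMN_cone m (lam : 'I_d -> R) :
  pairMN m (\sum_rho lam rho *: map_mx (fun z : int => z%:~R) (v rho)) =
  \sum_rho lam rho * (divmap v m 0 rho)%:~R.
Proof.
rewrite /pairMN; under eq_bigr => i _ do rewrite summxE mulr_sumr.
rewrite exchange_big /=; apply: eq_bigr => rho _.
rewrite mxE rmorph_sum mulr_sumr; apply: eq_bigr => i _.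
by rewrite !mxE rmorphM /=; ring.
Qed.

Definition coord_row (i : 'I_n) : 'rV[int]_d := \row_rho v rho 0 i.

(* The system [lam >= 0, sum_rho lam rho *: v rho = x] in the unknown [lam]. *)
Definition cone_system (x : 'rV[R]_n) : seq (constraint R d) :=
  [seq (- delta_mx 0 rho, 0) | rho <- enum 'I_d] ++
  [seq (coord_row i, x 0 i) | i <- enum 'I_n] ++
  [seq (- coord_row i, - x 0 i) | i <- enum 'I_n].

Lemma derivable_cone_system x p : derivable (cone_system x) p ->
  exists y : 'rV[int]_n, exists nu : 'I_d -> int,
    [/\ forall rho, 0 <= nu rho,
        forall rho, p.1 0 rho = divmap v y 0 rho - nu rho
      & p.2 = pairMN y x].
Proof.
elim=> [|p' q _ [y [nu [nu_ge0 hp1 hp2]]] hq].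
  by exists 0, (fun _ => 0); split; rewrite ?pairMN0 // => rho; rewrite divmap0 !mxE.
have eD (a b : 'rV[int]_d) k : (a + b) 0 k = a 0 k + b 0 k by rewrite mxE.
have eN (a : 'rV[int]_d) k : (- a) 0 k = - a 0 k by rewrite mxE.
have eR i rho : coord_row i 0 rho = v rho 0 i by rewrite mxE.
have eE k rho : (delta_mx 0 k : 'rV[int]_d) 0 rho = (rho == k)%:R by rewrite mxE eqxx.
have dD a b k : divmap v (a + b) 0 k = divmap v a 0 k + divmap v b 0 k.
  by rewrite divmapD mxE.
have dN a k : divmap v (- a) 0 k = - divmap v a 0 k by rewrite divmapN mxE.
move: hq; rewrite !mem_cat => /or3P [] /mapP [k _ ->].
- exists y, (fun rho => nu rho + (rho == k)%:R); split => [rho|rho|].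
  + by rewrite addr_ge0.
  + by rewrite /= eD eN eE hp1; lia.
  + by rewrite /= hp2 addr0.
- exists (y + delta_mx 0 k), nu; split => // [rho|].
  + by rewrite /= eD hp1 eR dD divmap_delta; lia.
  + by rewrite /= hp2 pairMND pairMN_delta.
- exists (y - delta_mx 0 k), nu; split => // [rho|].
  + by rewrite /= eD hp1 eN eR dD dN divmap_delta; lia.
  + by rewrite /= hp2 pairMND pairMNN pairMN_delta.
Qed.

(* Farkas' lemma: if the cone system is infeasible, Fourier-Motzkin elimination
   derives [0 <= b] with [b < 0], and its multipliers yield an [m] with
   [div m >= 0] and [<m, x> < 0]. *)
Lemma in_cone_dual (x : 'rV[R]_n) :
  (forall m, (forall rho, 0 <= divmap v m 0 rho) -> 0 <= pairMN m x) ->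
  in_cone v predT x.
Proof.
move=> hdual.
have [|[lam hlam]|[b b_lt0 hder]] := @fourier_motzkin R d (enum 'I_d) (cone_system x).
- by move=> p k _; rewrite mem_enum.
- exists lam; split.
    move=> rho; have := hlam (- delta_mx 0 rho, 0).
    rewrite /sat /= dotN dot_delta oppr_le0; apply.
    by rewrite mem_cat; apply/orP; left; apply/mapP; exists rho; rewrite ?mem_enum.
  apply/matrixP => a i; rewrite [a]ord1 summxE.
  have hle := hlam (coord_row i, x 0 i); have hge := hlam (- coord_row i, - x 0 i).
  rewrite /sat /= dotN lerN2 in hge.
  have <- : dot (coord_row i) lam = x 0 i.
    apply/eqP; rewrite eq_le; apply/andP; split; [apply: hle|apply: hge].
    + by rewrite !mem_cat; apply/or3P/Or32/mapP; exists i; rewrite ?mem_enum.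
    + by rewrite !mem_cat; apply/or3P/Or33/mapP; exists i; rewrite ?mem_enum.
  by apply: eq_bigr => rho _; rewrite !mxE mulrC.
- have [y [nu [nu_ge0 hb1 hb2]]] := derivable_cone_system hder.
  have : 0 <= pairMN y x.
    by apply: hdual => rho; move: (hb1 rho) (nu_ge0 rho); rewrite mxE /=; lia.
  by rewrite -hb2 /= leNgt b_lt0.
Qed.

End Cone.

Section QuiverOfSections.
Variables (n d r : nat) (v : 'I_d -> 'rV[int]_n) (D' : 'I_r.+1 -> 'rV[int]_d).

Lemma NQD y z : NQ v D' y -> NQ v D' z -> NQ v D' (y + z).
Proof.
move=> hy; elim=> [|x i j e _ IH hirr]; first by rewrite addr0.
by rewrite addrA; apply: NQadd.
Qed.

Lemma NQ_label_ge0 y : NQ v D' y -> forall rho, 0 <= y.2 0 rho.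
Proof.
elim=> [|y' i j e _ IH [[e_ge0 _] _]] rho; first by rewrite mxE.
by rewrite mxE addr_ge0.
Qed.

Definition degree (e : 'rV[int]_d) : int := \sum_rho e 0 rho.

Lemma degreeD e1 e2 : degree (e1 + e2) = degree e1 + degree e2.
Proof. by rewrite /degree -big_split; apply: eq_bigr => rho _; rewrite mxE. Qed.

Lemma degree_gt0 (e : 'rV[int]_d) : (forall rho, 0 <= e 0 rho) -> e != 0 -> 0 < degree e.
Proof.
move=> e_ge0 e_neq0.
have [rho e_rho] : exists rho, e 0 rho != 0.
  apply/existsP; apply: contraNT e_neq0 => /existsPn e0.
  by apply/eqP/matrixP => a rho; rewrite [a]ord1 mxE; apply/eqP/negPn/e0.
rewrite /degree (bigD1 rho) //=; apply: ltr_wpDr; first exact: sumr_ge0.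
by rewrite lt_def e_rho e_ge0.
Qed.

Hypothesis hdist : forall i j : 'I_r.+1, i != j -> ~ exists u, D' i - D' j = divmap v u.

Lemma section_neq0 i k e : k != i -> inv_section v (D' k - D' i) e -> e != 0.
Proof.
move=> hki [_ [u hu]]; apply/eqP => e0; apply: (hdist hki); exists (- u).
by rewrite divmapN; apply/eqP; rewrite -addr_eq0 -hu e0.
Qed.

(* Induction on the degree: a reducible section factors through some [E_k]
   into two sections of smaller degree, both nonzero because the [E_i] are
   pairwise non-isomorphic. *)
Lemma section_NQ i j e :
  inv_section v (D' j - D' i) e -> NQ v D' (chi j - chi i, e).
Proof.
move: {2}(absz (degree e)) (erefl (absz (degree e))) => N.
elim/ltn_ind: N i j e => N IH i j e hN hs.
have [[k [hki [hkj [e1 [e2 [h1 [h2 he]]]]]]]|hirr] := EM (exists k : 'I_r.+1,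
    k != i /\ k != j /\ exists e1 e2, inv_section v (D' k - D' i) e1 /\
                                      inv_section v (D' j - D' k) e2 /\ e = e1 + e2).
- have g1 := degree_gt0 h1.1 (section_neq0 hki h1).
  have g2 : 0 < degree e2 by apply: degree_gt0 h2.1 (section_neq0 _ h2); rewrite eq_sym.
  have hdeg := degreeD e1 e2; rewrite -he in hdeg.
  have n1 : NQ v D' (chi k - chi i, e1) by apply: (IH _ _ i k e1 erefl h1); lia.
  have n2 : NQ v D' (chi j - chi k, e2) by apply: (IH _ _ k j e2 erefl h2); lia.
  have -> : (chi j - chi i, e) = (chi k - chi i + (chi j - chi k), e1 + e2).
    by rewrite he; congr (_, _); rewrite [RHS]addrC subrKA.
  exact (NQD n1 n2).
- by rewrite -[(_, e)]add0r; apply: NQadd; [apply: NQ0 | split].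
Qed.

End QuiverOfSections.

Section ImageOfC.
Variables (R : realType) (n d r : nat).
Variables (v : 'I_d -> 'rV[int]_n) (D' : 'I_r.+1 -> 'rV[int]_d).

Lemma in_cone_functional (x : 'rV[R]_n) : in_cone v predT x ->
  exists phi : 'rV[int]_r.+1 * 'rV[int]_d -> R,
    [/\ forall y z, phi (y + z) = phi y + phi z,
        forall y, NQ v D' y -> 0 <= phi y
      & forall m, phi (psiQ r v m) = pairMN m x].
Proof.
move=> [lam [lam_ge0 ->]].
exists (fun y : 'rV[int]_r.+1 * 'rV[int]_d => \sum_rho lam rho * (y.2 0 rho)%:~R); split.
- move=> y z; rewrite -big_split; apply: eq_bigr => rho _.
  by rewrite mxE intrD mulrDr.
- move=> y hy; apply: sumr_ge0 => rho _.
  by rewrite mulr_ge0 // ler0z (NQ_label_ge0 hy).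
- by move=> m; rewrite pairMN_cone.
Qed.

Hypothesis hdist : forall i j : 'I_r.+1, i != j -> ~ exists u, D' i - D' j = divmap v u.

(* Each [m] in the dual cone gives the loop [psi m] at vertex [0], which lies
   in [N(Q)]. *)
Lemma functional_in_cone (phi : 'rV[int]_r.+1 * 'rV[int]_d -> R) (x : 'rV[R]_n) :
  (forall y, NQ v D' y -> 0 <= phi y) -> (forall m, phi (psiQ r v m) = pairMN m x) ->
  in_cone v predT x.
Proof.
move=> phi_ge0 phi_psi; apply: in_cone_dual => m hm.
rewrite -phi_psi; apply: phi_ge0.
rewrite /psiQ -(subrr (chi ord0)); apply: section_NQ hdist _ _ _ _.
by split => //; exists m; rewrite subrr add0r.
Qed.

End ImageOfC.

Theorem lemma2p10 (R : realType) (n d r : nat)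
  (v : 'I_d -> 'rV[int]_n) (D' : 'I_r.+1 -> 'rV[int]_d)
  (hprim : forall rho (k : nat), (forall i, (k%:Z %| v rho ord0 i)%Z) -> k = 1%N)
  (hinj : injective v)
  (hray : forall rho, ~ in_cone (R := R) v (fun rho' => rho' != rho)
                          (map_mx (fun z : int => z%:~R) (v rho)))
  (hstrong : forall x : 'rV[R]_n, in_cone v predT x -> in_cone v predT (- x) -> x = 0)
  (hfull : forall x : 'rV[R]_n, exists c : 'I_d -> R,
             x = \sum_rho c rho *: map_mx (fun z : int => z%:~R) (v rho))
  (hE0 : exists u, D' ord0 = divmap v u)
  (hdist : forall i j : 'I_r.+1, i != j -> ~ exists u, D' i - D' j = divmap v u) :
  forall x : 'rV[R]_n,
    in_cone v predT x <->
    exists phi : 'rV[int]_r.+1 * 'rV[int]_d -> R,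
      (forall y z, ZQ v D' y -> ZQ v D' z -> phi (y + z) = phi y + phi z) /\
      (forall y, NQ v D' y -> 0 <= phi y) /\
      (forall m : 'rV[int]_n, phi (psiQ r v m) = pairMN m x).
Proof.
move=> x; split.
- move=> /(in_cone_functional D') [phi [phiD phi_ge0 phi_psi]].
  by exists phi; split=> [y z _ _|]; [exact: phiD | split].
- move=> [phi [_ [phi_ge0 phi_psi]]].
  exact: (functional_in_cone hdist phi_ge0 phi_psi).
Qed.
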